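(* Assume ${\bf v}$ has the RCI property and $\mathcal{X}_{\bf v}=[0,\infty)^d$. For $f\in C_0(\mathcal{C}_{\bf v})$ define $\tilde f:[0,\infty)^d\to\mathbb{C}$ by $\tilde f(x)=f(\mathcal{L}^\emptyset_{{\bf v},x})$. Then $\tilde f$ is continuous outside a set of Lebesgue measure zero (namely outside $\bigcup_{J\ne\emptyset}\mathtt X^J_{\bf v}$).
   Context: Let $D\ge d\ge1$ and ${\bf v}=\{v_1,\dots,v_d\}$ linearly independent unit vectors in $\mathbb{R}^D$. For $I\subset\{1,\dots,d\}$: ${\bf v}_I=\{v_i\}_{i\in I}$, ${\bf v}_I\setminus i:={\bf v}_{I\setminus\{i\}}$, $\mathcal{L}_{{\bf v}_I}:=\{n\in\mathbb{Z}^D: v_i\cdot n\ge0\ \forall i\in I\}$, $\mathcal{L}_{\bf v}:=\mathcal{L}_{{\bf v}_{\{1,\dots,d\}}}$, $A_{{\bf v}_I}z=(v_i\cdot z)_{i\in I}$, $\mathcal{X}_{{\bf v}_I}:=\overline{A_{{\bf v}_I}(\mathcal{L}_{{\bf v}_I})}$, $\mathcal{X}_{\bf v}$ for $I=\{1,\dots,d\}$. Subsets of $\mathbb{Z}^D$ carry the Fell topology (= product topology on $\{0,1\}^{\mathbb{Z}^D}$). $\Xi_{{\bf v}_I}:=\overline{\{\mathcal{L}_{{\bf v}_I}-n: n\in\mathcal{L}_{{\bf v}_I}\}}$, $\Xi_\emptyset=\{\mathbb{Z}^D\}$, $\Xi_{\bf v}:=\Xi_{{\bf v}_{\{1,\dots,d\}}}$.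 For nonempty $I$, ${\bf v}_I$ is rational (R) if $A_{{\bf v}_I}(\mathcal{L}_{{\bf v}_I})$ is a closed, discrete, finitely generated subsemigroup of $[0,\infty)^I$, completely irrational (CI) if $\mathcal{X}_{{\bf v}_I}=[0,\infty)^I$; RCI: every ${\bf v}_I$ with $\emptyset\ne I\subsetneq\{1,\dots,d\}$ is R or CI. $\mathcal{C}_{\bf v}:=\Xi_{\bf v}\setminus\bigcup_{i}\Xi_{{\bf v}\setminus i}$ (subspace topology). For $J\subset\{1,\dots,d\}$, $x\in\mathbb{R}^d$: $\mathcal{L}^J_{{\bf v},x}:=\{n\in\mathbb{Z}^D: v_k\cdot n+x_k>0\ (k\in J),\ v_k\cdot n+x_k\ge0\ (k\notin J)\}$; for $J\neq\emptyset$, $\mathtt X^J_{\bf v}:=\{x\in\mathcal{X}_{\bf v}:\forall k\in J\ \exists n\in\mathbb{Z}^D,\ x_k=v_k\cdot n\neq0\}$. *)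

From HB Require Import structures.
From mathcomp Require Import all_boot all_order all_algebra.
From mathcomp Require Import all_classical all_reals all_analysis.
From mathcomp Require Import complex.
Import numFieldTopology.Exports numFieldNormedType.Exports.
Import Order.TTheory GRing.Theory Num.Theory.

Set Implicit Arguments.
Unset Strict Implicit.
Unset Printing Implicit Defensive.

Local Open Scope ring_scope.
Local Open Scope classical_set_scope.

Definition Cplx (R : realType) := (R[i] : numFieldType).

(* Subsets of Z^D (Z^D = 'rV[int]_D), as indicator functions, with the
   Fell topology = product topology on {0,1}^(Z^D). *)
Definition FellSp (D : nat) := {ptws 'rV[int]_D -> bool}.

Section Defs.
Variables (R : realType) (d D : nat).
Implicit Types (v : 'I_d -> 'rV[R]_D) (I J : {set 'I_d}).

Definition dotZ (u : 'rV[R]_D) (n : 'rV[int]_D) : R :=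
  \sum_(j < D) u 0 j * (n 0 j)%:~R.

Definition Lcone v I : FellSp D :=
  fun n => [forall i, (i \in I) ==> (0 <= dotZ (v i) n)].

(* A_{v_I} n = (v_i . n)_{i in I}; R^I is encoded as the coordinate subspace
   of R^d of vectors vanishing outside I. *)
Definition Amap v I (n : 'rV[int]_D) : 'rV[R]_d :=
  \row_i (if i \in I then dotZ (v i) n else 0).

Definition orthant I : set 'rV[R]_d :=
  [set x : 'rV[R]_d | forall i, if i \in I then 0 <= x 0 i else x 0 i == 0].

Definition Aimg v I : set 'rV[R]_d := Amap v I @` [set n | Lcone v I n].

Definition Xset v I : set 'rV[R]_d := closure (Aimg v I).

Definition rational v I : Prop :=
  let S := Aimg v I in
  [/\ closed S,
      (forall y, S y -> \forall z \near y, S z -> z = y),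
      S `<=` orthant I,
      (forall a b, S a -> S b -> S (a + b)) &
      exists s : seq 'rV[R]_d, {subset s <= S} /\
        S = [set x | exists c : 'I_(size s) -> nat,
                       x = \sum_(k < size s) (c k)%:R *: s`_k]].

Definition completely_irrational v I : Prop := Xset v I = orthant I.

Definition RCI v : Prop :=
  forall I, I != finset.set0 -> I != finset.setT -> rational v I \/ completely_irrational v I.

Definition Xi v I : set (FellSp D) :=
  closure [set ((fun m => Lcone v I (m + n)) : FellSp D) | n in [set n | Lcone v I n]].

Definition Cv v : set (FellSp D) :=
  Xi v finset.setT `\` \bigcup_(i in [set: 'I_d]) Xi v (finset.setC (finset.set1 i)).

Definition LJ v J (x : 'rV[R]_d) : FellSp D :=
  fun n => [forall k, if k \in J then 0 < dotZ (v k) n + x 0 k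
                                 else 0 <= dotZ (v k) n + x 0 k].

Definition XJ v J : set 'rV[R]_d :=
  [set x | Xset v finset.setT x /\
           forall k, k \in J -> exists n, x 0 k = dotZ (v k) n /\ x 0 k != 0].

Definition bad_set v : set 'rV[R]_d :=
  [set x | exists J, J != finset.set0 /\ XJ v J x].

Definition C0on (A : set (FellSp D)) (f : FellSp D -> Cplx R) : Prop :=
  {within A, continuous f} /\
  forall e : R, 0 < e -> exists K : set (FellSp D),
    [/\ K `<=` A, compact K & forall S, A S -> ~ K S -> `|f S| < (e%:C)%C].

End Defs.

Definition lebesgue_null (R : realType) (d : nat) (A : set 'rV[R]_d) : Prop :=
  forall e : R, 0 < e -> exists a b : nat -> 'rV[R]_d,
    [/\ (forall n i, a n 0 i <= b n 0 i),
        A `<=` \bigcup_n [set x | forall i, a n 0 i <= x 0 i <= b n 0 i] &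
        forall N, \sum_(n < N) \prod_(i < d) (b n 0 i - a n 0 i) < e].

From HB Require Import structures.
From mathcomp Require Import all_boot all_order all_algebra.
From mathcomp Require Import all_classical all_reals all_analysis.
From mathcomp Require Import complex.
From mathcomp Require Import lra.
Import numFieldTopology.Exports numFieldNormedType.Exports.
Import Order.TTheory GRing.Theory Num.Theory.

Set Implicit Arguments.
Unset Strict Implicit.
Unset Printing Implicit Defensive.

Local Open Scope ring_scope.
Local Open Scope classical_set_scope.

(* The map x |-> L^0_x into the Fell space is
   continuous at x as soon as every sign condition 0 <= v_k.n + y_k is locally
   constant for y near x in [0,oo)^d; this fails only if x_k = -v_k.n <> 0,
   i.e. on the bad set, a countable union of faces {x_k = c} of boxes, hence
   null. Each L^0_x lies in C_v: as X_v = [0,oo)^d there are n_j in L_v with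
   A_v n_j decreasing to x, and the translates L_v - n_j converge to L^0_x;
   linear independence yields a lattice point p with v_k.p >= 0 for k <> i but
   v_i.p < -x_i, which lies in every L_{v\i} - n (n in L_{v\i}) but not in
   L^0_x, an open condition keeping L^0_x outside Xi_{v\i}. Hence
   ftilde = f o L^0 is continuous wherever L^0 is. *)

Section FellTopology.
Variable D : nat.

Lemma fell_cvg (F : set_system (FellSp D)) {FF : Filter F} (S : FellSp D) :
  (forall n, \forall T \near F, T n = S n) -> F --> S.
Proof.
move=> FS; apply/cvg_sup => n; apply/cvg_image.
  by rewrite eqEsubset; split => // b _; exists (fun _ => b).
move=> P /= PSn; exists ((fun T : FellSp D => T n) @^-1` P).
  by apply: filterS (FS n) => T /= ->; exact: nbhs_singleton.
by rewrite image_preimage // eqEsubset; split => // b _; exists (fun _ => b).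
Qed.

Lemma fell_near_eval (S : FellSp D) n : \forall T \near S, T n = S n.
Proof.
exact: (@proj_continuous _ (fun _ : 'rV[int]_D => bool) n S [set b | b = S n]).
Qed.

End FellTopology.

Lemma within_cvg_comp {T U V : topologicalType} (A : set T) (B : set U)
    (g : T -> U) (f : U -> V) (x : T) :
  {within B, continuous f} -> (forall y, A y -> B (g y)) -> A x ->
  g @ within A (nbhs x) --> g x ->
  f (g y) @[y --> within A (nbhs x)] --> f (g x).
Proof.
move=> cf gAB Ax cg P /((subspace_continuousP B f).1 cf _ (gAB _ Ax)) /cg fgP.
have Bg : \forall y \near within A (nbhs x), B (g y).
  by apply: (within_nbhsW Ax) => y /gAB.
by apply: (filterS2 _ _ Bg fgP) => y Bgy; apply.
Qed.

Section Orthant.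
Variables (R : realType) (d : nat).
Implicit Types (x y : 'rV[R]_d).

Lemma orthantT_ge0 x : orthant finset.setT x -> forall k, 0 <= x 0 k.
Proof. by move=> Ox k; have := Ox k; rewrite finset.in_setT. Qed.

Lemma near_coord_gt {x k} {a : R} :
  a < x 0 k -> \forall y \near x, a < (y : 'rV[R]_d) 0 k.
Proof.
move=> ax; have := @cvgr_gt _ _ _ _ _ _ (@coord_continuous R 1 d 0 k x) _ ax.
by apply; exact: nbhs_filter.
Qed.

Lemma near_coord_lt {x k} {a : R} :
  x 0 k < a -> \forall y \near x, (y : 'rV[R]_d) 0 k < a.
Proof.
move=> xa; have := @cvgr_lt _ _ _ _ _ _ (@coord_continuous R 1 d 0 k x) _ xa.
by apply; exact: nbhs_filter.
Qed.

Lemma near_orthant_ge0_stable x k (c : R) : orthant finset.setT x ->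
  (c + x 0 k = 0 -> x 0 k = 0) ->
  \forall y \near within (orthant finset.setT) (nbhs x),
    (0 <= c + (y : 'rV[R]_d) 0 k) = (0 <= c + x 0 k).
Proof.
move=> Ox hx; have [cx|cx|cx] := ltrgtP 0 (c + x 0 k).
- have cxk : - c < x 0 k by lra.
  apply: cvg_within; move: (near_coord_gt cxk); apply: filterS => y yk.
  by apply: ltW; lra.
- have cxk : x 0 k < - c by lra.
  apply: cvg_within; move: (near_coord_lt cxk); apply: filterS => y yk.
  by apply/negbTE; rewrite -ltNge; lra.
- have x0 := hx (esym cx); have c0 : c = 0 by lra.
  apply: (within_nbhsW Ox) => y Oy.
  by rewrite c0 add0r orthantT_ge0.
Qed.

End Orthant.

Section Lattice.
Variables (R : realType) (d D : nat) (v : 'I_d -> 'rV[R]_D).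
Implicit Types (u : 'rV[R]_D) (m n p : 'rV[int]_D) (x : 'rV[R]_d).

Lemma dotZD u m n : dotZ u (m + n) = dotZ u m + dotZ u n.
Proof.
by rewrite /dotZ -big_split; apply: eq_bigr => j _; rewrite mxE intrD mulrDr.
Qed.

Lemma dotZN u n : dotZ u (- n) = - dotZ u n.
Proof.
by rewrite /dotZ -sumrN; apply: eq_bigr => j _; rewrite mxE intrN mulrN.
Qed.

Lemma dotZ_floor_approx u (w : 'cV[R]_D) :
  `|dotZ u (\row_j Num.floor (w j 0)) - \sum_j u 0 j * w j 0| <= \sum_j `|u 0 j|.
Proof.
rewrite /dotZ -sumrB; apply: le_trans (ler_norm_sum _ _ _) _.
apply: ler_sum => j _; rewrite mxE -mulrBr normrM ler_piMr //.
have := floor_le (w j 0); have := floorD1_gt (w j 0); rewrite intrD => lt_w le_w.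
by rewrite ler0_norm ?subr_le0 // opprB lerBlDl ltW.
Qed.

Lemma Lcone_setTE n : Lcone v finset.setT n = [forall k, 0 <= dotZ (v k) n].
Proof. by apply: eq_forallb => k; rewrite finset.in_setT. Qed.

Lemma LJ0E x n : LJ v finset.set0 x n = [forall k, 0 <= dotZ (v k) n + x 0 k].
Proof. by apply: eq_forallb => k; rewrite finset.in_set0. Qed.

Lemma LJ0_cvg x :
  Xset v finset.setT = orthant finset.setT -> orthant finset.setT x ->
  ~ bad_set v x ->
  (LJ v finset.set0 : 'rV[R]_d -> FellSp D)
    @ within (orthant finset.setT) (nbhs x) --> (LJ v finset.set0 x : FellSp D).
Proof.
move=> hX Ox xgood; apply: fell_cvg => n.
have sign_stable k : \forall y \near within (orthant finset.setT) (nbhs x),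
    (0 <= dotZ (v k) n + (y : 'rV[R]_d) 0 k) = (0 <= dotZ (v k) n + x 0 k).
  suff x_k_eq0 : dotZ (v k) n + x 0 k = 0 -> x 0 k = 0.
    exact: near_orthant_ge0_stable Ox x_k_eq0.
  move=> nxk0; apply: contra_notP xgood => xk0.
  exists (finset.set1 k); split.
    by apply/finset.set0Pn; exists k; rewrite finset.in_set1.
  split; first by rewrite hX.
  move=> _ /finset.set1P ->; exists (- n); split; last exact/eqP.
  by rewrite dotZN; lra.
apply: filterS (filter_forall _ sign_stable) => y signs /=.
by rewrite !LJ0E; apply: eq_forallb => k; rewrite signs.
Qed.

Lemma lattice_point_separating i (a : R) : row_free (\matrix_(k < d) v k) ->
  exists p, (forall k, k != i -> 0 <= dotZ (v k) p) /\ dotZ (v i) p < a.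
Proof.
(* p rounds down a real w with v_k.w = t_k; the rounding moves each v_k.p by
   at most C. *)
move=> /row_freeP [B vB].
pose C := \sum_(k < d) \sum_(j < D) `|v k 0 j|.
pose t : 'rV[R]_d := \row_k (if k == i then a - C - 1 else C).
pose w := B *m t^T.
have vw k : \sum_j v k 0 j * w j 0 = t 0 k.
  have : (\matrix_(k < d) v k) *m w = t^T by rewrite /w mulmxA vB mul1mx.
  move/(congr1 (fun A : 'cV[R]_d => A k 0)); rewrite !mxE => <-.
  by apply: eq_bigr => j _; congr (_ * _); rewrite mxE.
have near_t k : `|dotZ (v k) (\row_j Num.floor (w j 0)) - t 0 k| <= C.
  rewrite -vw; apply: le_trans (dotZ_floor_approx _ _) _.
  rewrite /C (bigD1 k) //= lerDl sumr_ge0 // => l _; exact: sumr_ge0.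
exists (\row_j Num.floor (w j 0)); split.
- move=> k ki; have := near_t k; rewrite ler_distl mxE (negbTE ki) subrr.
  by case/andP.
- have := near_t i; rewrite ler_distl mxE eqxx => /andP [_ ?]; lra.
Qed.

Lemma LJ0_notin_Xi_setC1 x i : row_free (\matrix_(k < d) v k) ->
  ~ Xi v (finset.setC (finset.set1 i)) (LJ v finset.set0 x).
Proof.
move=> /(lattice_point_separating i (- x 0 i)) [p [p_ge0 p_lt]] x_cl.
have p_notin : LJ v finset.set0 x p = false.
  by apply/negbTE; rewrite LJ0E; apply/forallPn; exists i; rewrite -ltNge; lra.
have [_ [[n n_in <-] /= np]] := x_cl _ (fell_near_eval (LJ v finset.set0 x) p).
move: np; rewrite p_notin => /negP; apply; apply/forallP => k; apply/implyP => ki.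
rewrite dotZD addr_ge0 //; first by apply: p_ge0; rewrite finset.in_setC1 in ki.
by move: n_in => /forallP /(_ k) /implyP; apply.
Qed.

Lemma Aimg_approx_above x (r : R) :
  Xset v finset.setT = orthant finset.setT -> orthant finset.setT x -> 0 < r ->
  exists n, Lcone v finset.setT n /\ forall k, x 0 k < dotZ (v k) n < x 0 k + r.
Proof.
move=> hX Ox r_gt0; pose z : 'rV[R]_d := \row_k (x 0 k + r / 2).
have z_cl : closure (Aimg v finset.setT) z.
  rewrite -/(Xset _ _) hX => k; rewrite finset.in_setT mxE.
  by have := orthantT_ge0 Ox k; lra.
have near_z k : \forall y \near z, x 0 k < (y : 'rV[R]_d) 0 k < x 0 k + r.
  have [xz zx] : x 0 k < z 0 k /\ z 0 k < x 0 k + r by rewrite mxE; split; lra.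
  by apply: filterS2 _ _ (near_coord_gt xz) (near_coord_lt zx) => y -> ->.
have [_ [[n n_in <-] nz]] := z_cl _ (filter_forall _ near_z).
by exists n; split => // k; have := nz k; rewrite mxE finset.in_setT.
Qed.

Lemma LJ0_cvg_translates x (N : nat -> 'rV[int]_D) :
  (forall j k, x 0 k < dotZ (v k) (N j) < x 0 k + j.+1%:R^-1) ->
  (fun j => (fun m => Lcone v finset.setT (m + N j)) : FellSp D) @ \oo
    --> (LJ v finset.set0 x : FellSp D).
Proof.
move=> N_near; apply: fell_cvg => m.
have sign_eventually k : \forall j \near \oo,
    (0 <= dotZ (v k) m + dotZ (v k) (N j)) = (0 <= dotZ (v k) m + x 0 k).
  have [mx_ge0|mx_lt0] := leP 0 (dotZ (v k) m + x 0 k).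
    by apply: nearW => j; have /andP[? _] := N_near j k; apply: ltW; lra.
  have mx_gt0 : 0 < - (dotZ (v k) m + x 0 k) by rewrite oppr_gt0.
  apply: filterS (near_infty_natSinv_lt (PosNum mx_gt0)) => j /= j_lt.
  have /andP[_] := N_near j k; move: (j.+1%:R^-1 : R) j_lt => u u_lt Nj_lt.
  by apply/negbTE; rewrite -ltNge; lra.
apply: filterS (filter_forall _ sign_eventually) => j signs /=.
by rewrite Lcone_setTE LJ0E; apply: eq_forallb => k; rewrite dotZD signs.
Qed.

Lemma LJ0_in_Xi x :
  Xset v finset.setT = orthant finset.setT -> orthant finset.setT x ->
  Xi v finset.setT (LJ v finset.set0 x).
Proof.
move=> hX Ox; have /choice [N N_near] : forall j : nat, exists n,
    Lcone v finset.setT n /\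
    forall k, x 0 k < dotZ (v k) n < x 0 k + j.+1%:R^-1.
  by move=> j; apply: Aimg_approx_above; rewrite ?invr_gt0 ?ltr0n.
pose T j : FellSp D := fun m => Lcone v finset.setT (m + N j).
move=> S /(LJ0_cvg_translates (fun j => (N_near j).2)) S_T.
have [j Sj] := filter_ex (S_T : \forall j \near \oo, S (T j)).
by exists (T j); split => //; exists (N j); first exact: (N_near j).1.
Qed.

Lemma LJ0_in_Cv x : row_free (\matrix_(k < d) v k) ->
  Xset v finset.setT = orthant finset.setT -> orthant finset.setT x ->
  Cv v (LJ v finset.set0 x).
Proof.
move=> hindep hX Ox; split; first exact: LJ0_in_Xi.
by case=> i _; exact: LJ0_notin_Xi_setC1.
Qed.

Lemma bad_set_null : (1 <= d)%N -> Xset v finset.setT = orthant finset.setT ->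
  lebesgue_null (bad_set v).
Proof.
(* The bad point x with x_k = v_k.n lies in the degenerate box
   {x_k = v_k.n} x [0, M]^(d-1), which is indexed by (k, n, M). *)
move=> d_gt0 hX e e_gt0.
pose dec j : 'I_d * 'rV[int]_D * nat := odflt (Ordinal d_gt0, 0, 0%N) (unpickle j).
pose c (y : 'I_d * 'rV[int]_D * nat) := dotZ (v y.1.1) y.1.2.
exists (fun j => \row_i (if i == (dec j).1.1 then c (dec j) else 0)).
exists (fun j => \row_i (if i == (dec j).1.1 then c (dec j) else (dec j).2%:R)).
split.
- by move=> j i; rewrite !mxE; case: ifP.
- move=> x [J [J_neq0 [Xx xJ]]].
  have [k kJ] := finset.set0Pn _ J_neq0; have [n [xk _]] := xJ k kJ.
  have Ox : orthant finset.setT x by rewrite -hX.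
  exists (pickle (k, n, (Num.truncn (\sum_i x 0 i)).+1)) => //.
  rewrite /dec pickleK /= => i; rewrite !mxE.
  case: eqP => [->|_]; first by rewrite /c /= -xk lexx.
  rewrite orthantT_ge0 //=; apply: le_trans (ltW (truncnS_gt _)).
  by rewrite (bigD1 i) //= lerDl sumr_ge0 // => l _; exact: orthantT_ge0.
- move=> N; rewrite big1 // => j _.
  by rewrite (bigD1 (dec j).1.1) //= !mxE eqxx subrr mul0r.
Qed.

End Lattice.

Theorem mainTheorem13 (R : realType) (d D : nat) (v : 'I_d -> 'rV[R]_D)
  (hd : (1 <= d)%N) (hdD : (d <= D)%N)
  (hunit : forall i, \sum_(j < D) (v i 0 j) ^+ 2 = 1)
  (hindep : row_free (\matrix_(i < d) v i))
  (hRCI : RCI v)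
  (hX : Xset v finset.setT = orthant finset.setT)
  (f : FellSp D -> Cplx R) (hf : C0on (Cv v) f) :
  let ftilde := fun x : 'rV[R]_d => f (LJ v finset.set0 x) in
  [/\ (forall x, orthant finset.setT x -> Cv v (LJ v finset.set0 x)),
      lebesgue_null (bad_set v) &
      forall x, orthant finset.setT x -> ~ bad_set v x ->
        ftilde @ within (orthant finset.setT) (nbhs x) --> ftilde x].
Proof.
move=> ftilde; have LJ0_Cv x := @LJ0_in_Cv R d D v x hindep hX.
split => [//||x Ox xgood]; first exact: bad_set_null.
exact: (within_cvg_comp hf.1 LJ0_Cv Ox (LJ0_cvg hX Ox xgood)).
Qed.
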